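(* For a positive integer $n$, let $m(n)$ denote the minimal integer $m$ such that there exist subsets $A_1,\ldots,A_m$ of $\{1,\ldots,4n\}$ with $|A_i|=2n$ for each $i$, such that for every subset $B\subseteq\{1,\ldots,4n\}$ with $|B|=2n$ there is at least one $i$, $1\le i\le m$, with $|A_i\cap B|=n$. Then for every prime $p>3$ we have $m(p)\ge p$. *)

From mathcomp Require Import all_boot.
Set Implicit Arguments. Unset Strict Implicit. Unset Printing Implicit Defensive.

(* The ground set {1,...,4n} is modelled by 'I_(4n) = {0,...,4n-1}. *)

Definition good_family (n : nat) (s : seq {set 'I_(4 * n)}) : Prop :=
  (forall A, A \in s -> #|A| = 2 * n) /\
  (forall B : {set 'I_(4 * n)}, #|B| = 2 * n ->
     exists2 A, A \in s & #|A :&: B| = n).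

Arguments good_family : clear implicits.

Definition has_good_family (n k : nat) : Prop :=
  exists s : seq {set 'I_(4 * n)}, size s = k /\ good_family n s.

Definition good_familyb (n : nat) (s : seq {set 'I_(4 * n)}) : bool :=
  all (fun A : {set 'I_(4 * n)} => #|A| == 2 * n) s &&
  [forall B : {set 'I_(4 * n)}, (#|B| == 2 * n) ==>
     has (fun A : {set 'I_(4 * n)} => #|A :&: B| == n) s].

Arguments good_familyb : clear implicits.

Lemma good_familyP n s : reflect (good_family n s) (good_familyb n s).
Proof.
apply: (iffP andP) => [[/allP h1 /forallP h2]|[h1 h2]]; split.
- by move=> A /h1 /eqP.
- move=> B hB; have := h2 B; rewrite hB eqxx /= => /hasP[A hA /eqP]; by exists A.
- by apply/allP=> A /h1 ->.
- apply/forallP=> B; apply/implyP=> /eqP /h2 [A hA hAB].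
  by apply/hasP; exists A => //; rewrite hAB.
Qed.

Definition has_good_familyb (n k : nat) : bool :=
  [exists s : k.-tuple {set 'I_(4 * n)}, good_familyb n s].

Lemma has_good_familyP n k : reflect (has_good_family n k) (has_good_familyb n k).
Proof.
apply: (iffP existsP) => [[s /good_familyP hs]|[s [hk /good_familyP hs]]].
  by exists s; rewrite size_tuple.
by subst k; exists (in_tuple s).
Qed.

Lemma exists_subset_card (T : finType) (A : {set T}) k :
  k <= #|A| -> exists2 C : {set T}, C \subset A & #|C| = k.
Proof.
move=> hk; exists [set x in take k (enum A)].
  apply/subsetP=> x; rewrite inE => /mem_take; by rewrite mem_enum.
rewrite cardsE; have /card_uniqP -> : uniq (take k (enum A)).
  exact/take_uniq/enum_uniq.
by rewrite size_takel // -cardE.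
Qed.

Lemma has_good_family_ex n : exists k, has_good_family n k.
Proof.
pose S : seq {set 'I_(4 * n)} := filter (fun A : {set 'I_(4 * n)} => #|A| == 2 * n) (enum [set: {set 'I_(4 * n)}]).
exists (size S), S; split=> //; split.
  by move=> A; rewrite mem_filter => /andP[/eqP].
move=> B hB.
have [C1 sC1 cC1] : exists2 C : {set 'I_(4 * n)}, C \subset B & #|C| = n.
  apply: (@exists_subset_card _ B n); rewrite hB; exact: leq_pmull.
have hBc : #|~: B| = 2 * n.
  by rewrite cardsCs setCK card_ord hB -mulnBl.
have [C2 sC2 cC2] : exists2 C : {set 'I_(4 * n)}, C \subset ~: B & #|C| = n.
  apply: (@exists_subset_card _ (~: B) n); rewrite hBc; exact: leq_pmull.
have dis : [disjoint C1 & C2].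
  rewrite -setI_eq0; apply/eqP/setP=> x; rewrite !inE.
  apply/negbTE/andP=> [[/(subsetP sC1) xB /(subsetP sC2)]].
  by rewrite inE xB.
exists (C1 :|: C2).
  rewrite mem_filter mem_enum in_setT andbT.
  by rewrite cardsU (disjoint_setI0 dis) cards0 subn0 cC1 cC2 mul2n addnn.
rewrite setIUl (setIidPl sC1).
have -> : C2 :&: B = set0.
  apply/setP=> x; rewrite !inE.
  apply/negbTE/andP=> [[/(subsetP sC2)]].
  by rewrite inE => /negbTE ->.
by rewrite setU0.
Qed.

Lemma has_good_familyb_ex n : exists k, has_good_familyb n k.
Proof. by have [k /has_good_familyP hk] := has_good_family_ex n; exists k. Qed.

Definition m (n : nat) : nat := ex_minn (has_good_familyb_ex n).

From mathcomp Require Import all_boot all_algebra.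
From mathcomp Require Import zify.
Set Implicit Arguments. Unset Strict Implicit. Unset Printing Implicit Defensive.
Import GRing.Theory.

(* Suppose a good family A_1, ..., A_k with k < p existed.  Starting from one
   point and adding one point per A_i, then padding, gives a p-set S with
   0 < |A_i :&: S| < p for all i.  Consider
   Sigma = \sum_(B >= S, |B| = 2p) \prod_i |A_i :&: B| modulo p.  Goodness makes
   each term a multiple of p, so Sigma = 0.  Expanding the products over choice
   functions f (f i \in A_i), each f contributes 'C(3p - d, 2p) with
   d = |{f i} :\: S| < p, which is 3 modulo p if d = 0 and 1 otherwise.  Hence
   Sigma = \prod_i |A_i| + 2 \prod_i |A_i :&: S| = 2 \prod_i |A_i :&: S| as
   |A_i| = 2p, which is nonzero modulo p for p > 2. *)

Lemma prod_card_ffun (I T : finType) (X : I -> {set T}) :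
  \prod_i #|X i| = #|[set f : {ffun I -> T} | [forall i, f i \in X i]]|.
Proof.
under eq_bigr do rewrite -sum1_card.
rewrite bigA_distr_big_dep -sum1dep_card /=.
apply: eq_big => [f | f _]; last by rewrite big1.
by apply/familyP/forallP.
Qed.

Lemma card_supersets (T : finType) (U : {set T}) r : r <= #|T| ->
  #|[set B : {set T} | U \subset B & #|B| == r]| = 'C(#|T| - #|U|, #|T| - r).
Proof.
move=> le_rT; rewrite -[in #|T| - _](cardsC U) addKn.
rewrite -(card_imset _ (@setC_inj T)) -cards_draws.
apply: eq_card => C; rewrite inE; apply/imsetP/andP.
  case=> B; rewrite inE => /andP[sUB /eqP cB] ->.
  by rewrite setCS cardsCs setCK cB.
case=> sCU /eqP cC; exists (~: C); last by rewrite setCK.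
by rewrite inE -setCS setCK sCU /= cardsCs setCK cC subKn.
Qed.

Lemma imset_subsetE (I T : finType) (f : I -> T) (X : {set T}) :
  ([set f i | i : I] \subset X) = [forall i, f i \in X].
Proof.
apply/subsetP/forallP => [h i | h _ /imsetP[i _ ->] //].
by rewrite h ?imset_f.
Qed.

Lemma sum_prod_card_setI (I T : finType) (F : I -> {set T}) (P : pred {set T}) :
  \sum_(B | P B) \prod_i #|F i :&: B| =
  \sum_(f : {ffun I -> T} | [forall i, f i \in F i])
     #|[set B | P B & [set f i | i : I] \subset B]|.
Proof.
under eq_bigr do rewrite prod_card_ffun -sum1dep_card.
rewrite (exchange_big_dep (fun f : {ffun I -> T} => [forall i, f i \in F i])) /=.
  apply: eq_bigr => f Ff; rewrite -sum1dep_card; apply: eq_bigl => B.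
  rewrite imset_subsetE; congr (_ && _); apply/forallP/forallP => h i.
    by have /setIP[] := h i.
  by rewrite inE (forallP Ff) h.
by move=> B f _ /forallP h; apply/forallP => i; have /setIP[] := h i.
Qed.

Lemma natr_bin_add_dvd p q r : prime p -> p %| q -> r < p ->
  ('C(q + r, r)%:R : 'F_p)%R = 1%R.
Proof.
move=> p_pr p_q; elim: r => [|r IHr] lt_r1p; first by rewrite addn0 bin0.
have r1_neq0 : (r.+1%:R : 'F_p)%R != 0%R.
  by rewrite -(dvdn_pcharf (pchar_Fp p_pr)) gtnNdvd.
have /eqP q_eq0 : (q%:R : 'F_p)%R == 0%R by rewrite -(dvdn_pcharf (pchar_Fp p_pr)).
apply: (mulfI r1_neq0); have := mul_bin_diag (q + r.+1) r.
rewrite addnS /= mulr1 -natrM => <-.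
rewrite natrM IHr 1?ltnW // mulr1.
by rewrite -addnS natrD q_eq0 add0r.
Qed.

Lemma natr_bin_3p_sub p d : prime p -> d < p ->
  ('C(3 * p - d, 2 * p)%:R : 'F_p)%R = (if d == 0 then 3%:R else 1)%R.
Proof.
move=> p_pr lt_dp; have p_gt0 := prime_gt0 p_pr.
have p_2p : p %| 2 * p by rewrite dvdn_mull.
rewrite -bin_sub; last by lia.
have -> : 3 * p - d - 2 * p = p - d by lia.
case: d lt_dp => [|d] lt_dp /=; last first.
  have -> : 3 * p - d.+1 = 2 * p + (p - d.+1) by lia.
  by rewrite natr_bin_add_dvd //; lia.
have bin_3p_p : 'C(3 * p, p) = 3 * 'C(2 * p + p.-1, p.-1).
  apply/eqP; rewrite -(eqn_pmul2l p_gt0).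
  have := mul_bin_diag (3 * p) p.-1; rewrite prednK // => <-.
  have -> : (3 * p).-1 = 2 * p + p.-1 by lia.
  by rewrite mulnCA mulnA.
by rewrite !subn0 bin_3p_p natrM natr_bin_add_dvd ?mulr1 ?prednK.
Qed.

Section SupersetSumModP.

Variables (p : nat) (T I : finType) (F : I -> {set T}) (S : {set T}).
Hypotheses (p_pr : prime p) (card_T : #|T| = 4 * p).
Hypotheses (card_I : #|I| < p) (card_S : #|S| = p).

Lemma natr_card_supersets_imset (f : {ffun I -> T}) :
  (#|[set B : {set T} | (S \subset B) && (#|B| == 2 * p)
                     & [set f i | i : I] \subset B]|%:R : 'F_p)%R =
  (if [forall i, f i \in S] then 3%:R else 1)%R.
Proof.
set J := [set f i | i : I].
have -> : [set B : {set T} | (S \subset B) && (#|B| == 2 * p) & J \subset B] =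
          [set B : {set T} | S :|: J \subset B & #|B| == 2 * p].
  by apply/setP => B; rewrite !inE subUset andbAC.
rewrite card_supersets card_T; last by lia.
have le_p_SJ : p <= #|S :|: J| by rewrite -card_S subset_leq_card ?subsetUl.
have le_SJ : #|S :|: J| <= p + #|I|.
  rewrite cardsU card_S; apply: leq_trans (leq_subr _ _) _; rewrite leq_add2l.
  exact: leq_trans (leq_imset_card _ _) _.
have -> : 4 * p - #|S :|: J| = 3 * p - (#|S :|: J| - p) by lia.
have -> : 4 * p - 2 * p = 2 * p by lia.
rewrite natr_bin_3p_sub //; last by lia.
have -> : (#|S :|: J| - p == 0) = (J \subset S).
  rewrite subn_eq0 -card_S -[LHS]andTb -(subsetUl S J) -eqEcard eq_sym.
  exact: sameP eqP setUidPl.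
by rewrite imset_subsetE.
Qed.

Lemma natr_sum_prod_card_setI_supersets :
  ((\sum_(B : {set T} | (S \subset B) && (#|B| == 2 * p))
      \prod_i #|F i :&: B|)%:R : 'F_p)%R =
  ((\prod_i #|F i|)%:R + 2%:R * (\prod_i #|F i :&: S|)%:R)%R.
Proof.
have three_if (b : bool) :
    ((if b then 3%:R else 1) = 1 + if b then 2%:R else 0 :> 'F_p)%R.
  by case: b; rewrite ?addr0 // -natrD.
rewrite sum_prod_card_setI natr_sum.
under eq_bigr do rewrite natr_card_supersets_imset three_if.
rewrite big_split !prod_card_ffun -!sum1dep_card !natr_sum mulr_sumr /=.
congr (_ + _)%R; rewrite -big_mkcondr /=.
apply: eq_big => [f | f _]; last by rewrite mulr1.
apply/andP/forallP => [[/forallP FfP /forallP SfP] i | FSf].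
  by rewrite inE FfP SfP.
by split; apply/forallP => i; have /setIP[] := FSf i.
Qed.

End SupersetSumModP.

Definition splits (T : finType) (R A : {set T}) : bool :=
  (R :&: A != set0) && (R :\: A != set0).

Lemma splitsS (T : finType) (R R' A : {set T}) :
  R \subset R' -> splits R A -> splits R' A.
Proof.
move=> sRR' /andP[RA_neq0 RdA_neq0]; apply/andP; split.
  by apply: contraNneq RA_neq0 => RA_eq0; rewrite -subset0 -RA_eq0 setSI.
by apply: contraNneq RdA_neq0 => RdA_eq0; rewrite -subset0 -RdA_eq0 setSD.
Qed.

Lemma exists_splitting_set (T : finType) (x0 : T) (s : seq {set T}) :
  {in s, forall A : {set T}, 0 < #|A| < #|T|} ->
  exists R : {set T},
    [/\ x0 \in R, #|R| <= (size s).+1 & {in s, forall A : {set T}, splits R A}].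
Proof.
elim: s => [|A s IHs] s_proper.
  by exists [set x0]; rewrite set11 cards1.
have [|R [x0R card_R R_splits]] := IHs.
  by move=> B Bs; apply: s_proper; rewrite inE Bs orbT.
have /andP[A_gt0 A_ltT] := s_proper A (mem_head A s).
(* one new point, on the side of A opposite to x0, splits A *)
have [y yR_splits] : exists y, splits (y |: R) A.
  have [x0A | x0nA] := boolP (x0 \in A).
    have : 0 < #|~: A| by rewrite -(cardsC A) -ltn_subLR // subnn in A_ltT.
    rewrite card_gt0 => /set0Pn[b]; rewrite inE => bnA.
    by exists b; apply/andP; split; apply/set0Pn;
      [exists x0; rewrite !inE x0R x0A orbT | exists b; rewrite !inE eqxx bnA].
  move: A_gt0; rewrite card_gt0 => /set0Pn[a aA].
  by exists a; apply/andP; split; apply/set0Pn;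
    [exists a; rewrite !inE eqxx aA | exists x0; rewrite !inE x0R x0nA orbT].
exists (y |: R); split; first by rewrite !inE x0R orbT.
  by rewrite cardsU1 /=; case: (y \notin R) => /=; lia.
move=> B; rewrite inE => /predU1P[-> // | Bs].
exact: splitsS (subsetUr _ _) (R_splits B Bs).
Qed.

Lemma exists_superset_card (T : finType) (R : {set T}) k :
  #|R| <= k <= #|T| -> exists2 S : {set T}, R \subset S & #|S| = k.
Proof.
move=> /andP[le_Rk le_kT].
have [|C sCRc card_C] := @exists_subset_card T (~: R) (#|T| - k).
  by have := cardsC R; lia.
exists (~: C); first by rewrite -setCS setCK.
by rewrite cardsCs setCK card_C subKn.
Qed.

Lemma exists_set_meeting_strictly (T : finType) (s : seq {set T}) k :
  {in s, forall A : {set T}, 0 < #|A| < #|T|} -> size s < k <= #|T| ->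
  exists2 S : {set T}, #|S| = k & {in s, forall A : {set T}, 0 < #|A :&: S| < k}.
Proof.
move=> s_proper /andP[lt_sk le_kT].
have /card_gt0P[x0 _] : 0 < #|T| := leq_trans (leq_ltn_trans (leq0n _) lt_sk) le_kT.
have [R [_ card_R R_splits]] := exists_splitting_set x0 s_proper.
have [|S sRS card_S] := @exists_superset_card T R k.
  by rewrite (leq_trans card_R lt_sk).
exists S => // A As; have /andP[RA_neq0 RdA_neq0] := splitsS sRS (R_splits A As).
rewrite card_gt0 setIC RA_neq0 /= -card_S -(cardsID A S) -[X in X < _]addn0.
by rewrite ltn_add2l card_gt0.
Qed.

Lemma leq_size_good_family p s : prime p -> 2 < p -> good_family p s -> p <= size s.
Proof.
move=> p_pr p_gt2 [card_s meet_s]; rewrite leqNgt; apply/negP => small_s.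
have card_T : #|'I_(4 * p)| = 4 * p by rewrite card_ord.
have [|B0 _ card_B0] := @exists_subset_card _ [set: 'I_(4 * p)] (2 * p).
  by rewrite cardsT card_T leq_pmul2r ?prime_gt0.
have [||S card_S S_meets] := @exists_set_meeting_strictly _ s p.
- by move=> A /card_s ->; rewrite card_T; apply/andP; split; lia.
- by rewrite small_s card_T; lia.
pose F (i : 'I_(size s)) := nth set0 s i.
have F_in_s i : F i \in s := mem_nth set0 (ltn_ord i).
have index_lt A : A \in s -> index A s < size s by rewrite index_mem.
have p_dvd_0 n : p %| n -> (n%:R : 'F_p)%R = 0%R.
  by move=> p_n; apply/eqP; rewrite -(dvdn_pcharf (pchar_Fp p_pr)).
have sum_eq0 : ((\sum_(B : {set 'I_(4 * p)} | (S \subset B) && (#|B| == 2 * p))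
                   \prod_i #|F i :&: B|)%:R : 'F_p)%R = 0%R.
  rewrite natr_sum big1 // => B /andP[_ /eqP card_B].
  have [A As card_AB] := meet_s B card_B.
  rewrite natr_prod (bigD1 (Ordinal (index_lt A As))) //= /F nth_index //.
  by rewrite card_AB p_dvd_0 ?mul0r.
have prod_eq0 : ((\prod_i #|F i|)%:R : 'F_p)%R = 0%R.
  have [A As _] := meet_s B0 card_B0.
  rewrite natr_prod (bigD1 (Ordinal (index_lt A As))) //= card_s ?F_in_s //.
  by rewrite p_dvd_0 ?mul0r ?dvdn_mull.
have prod_S_neq0 : ((2 * \prod_i #|F i :&: S|)%:R : 'F_p)%R != 0%R.
  rewrite -(dvdn_pcharf (pchar_Fp p_pr)) Euclid_dvdM // Euclid_dvd_prod //.
  rewrite gtnNdvd //= big1 // => i _.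
  by have /andP[AS_gt0 AS_ltp] := S_meets _ (F_in_s i); rewrite gtnNdvd.
have card_I : #|'I_(size s)| < p by rewrite card_ord.
have := natr_sum_prod_card_setI_supersets F p_pr card_T card_I card_S.
rewrite sum_eq0 prod_eq0 add0r -natrM => eq0.
by rewrite -eq0 eqxx in prod_S_neq0.
Qed.

Theorem theorem2 (p : nat) : prime p -> 3 < p -> p <= m p.
Proof.
move=> p_pr p_gt3; rewrite /m.
case: ex_minnP => k /has_good_familyP[s [<- good_s]] _.
exact: leq_size_good_family p_pr (ltnW p_gt3) good_s.
Qed.
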